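(* Let $D$ be a real division algebra with $\dim_{\mathbb{R}} D \geq 2$, and let $n \geq 0$. Let \[ f_n : D^n \times D^n \to D^n,\quad ((a_1,\ldots,a_n),(b_1,\ldots,b_n)) \mapsto (a_1 b_1, \ldots, a_n b_n) \] be componentwise multiplication, regarded as an $\mathbb{R}$-bilinear map. Then $Q(f_n) \leq n d$, where $d = \tfrac{1}{2}\dim_{\mathbb{R}} D$.
   Context: A real division algebra is a finite-dimensional real vector space $D$ with an $\mathbb{R}$-bilinear multiplication $D \times D \to D$, $(a,b)\mapsto ab$, such that for every nonzero $a \in D$ the left multiplication $b \mapsto ab$ is invertible; no associativity or other conditions are imposed. For an $\mathbb{R}$-bilinear map $f : U \times V \to W$ between finite-dimensional real vector spaces, its subrank $Q(f)$ is the largest $r$ such that there exist $\mathbb{R}$-linear maps $\varphi_1 : \mathbb{R}^r \to U$, $\varphi_2 : \mathbb{R}^r \to V$, $\varphi_3 : W \to \mathbb{R}^r$ with $\varphi_3(f(\varphi_1(a), \varphi_2(b))) = (a_1b_1,\ldots,a_rb_r)$ for all $a,b \in \mathbb{R}^r$ (equivalently, the subrank of the corresponding tensor in $U^*\otimes V^*\otimes W$). *)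

From HB Require Import structures.
From mathcomp Require Import all_boot all_order all_algebra.
From mathcomp Require Import reals.
Set Implicit Arguments. Unset Strict Implicit. Unset Printing Implicit Defensive.
Import Order.TTheory GRing.Theory Num.Theory.
Local Open Scope ring_scope.

Section Defs.
Variable R : realType.

Definition Rlin (U V : lmodType R) (g : U -> V) : Prop :=
  forall (k : R) (x y : U), g (k *: x + y) = k *: g x + g y.

Definition Rbilin (U V W : lmodType R) (f : U -> V -> W) : Prop :=
  (forall u, Rlin (f u)) /\ (forall v, Rlin (fun u => f u v)).

Definition division_algebra (D : vectType R) (mul : D -> D -> D) : Prop :=
  Rbilin mul /\ forall a : D, a != 0 -> bijective (mul a).

(* There exist linear phi1 : R^r -> U, phi2 : R^r -> V, phi3 : W -> R^r with
   phi3 (f (phi1 a) (phi2 b)) = (a_1 b_1, ..., a_r b_r):  r <= Q(f). *)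
Definition subrank_restriction (U V W : lmodType R) (f : U -> V -> W) (r : nat)
  : Prop :=
  exists (phi1 : 'rV[R]_r -> U) (phi2 : 'rV[R]_r -> V) (phi3 : W -> 'rV[R]_r),
    [/\ Rlin phi1, Rlin phi2, Rlin phi3 &
        forall a b : 'rV[R]_r,
          phi3 (f (phi1 a) (phi2 b)) = \row_i (a 0 i * b 0 i)].

(* Q(f) <= q  (Q(f) is the largest r admitting such a restriction). *)
Definition subrank_le (U V W : lmodType R) (f : U -> V -> W) (q : nat) : Prop :=
  forall r, subrank_restriction f r -> (r <= q)%N.

Definition compmul (D : vectType R) (mul : D -> D -> D) (n : nat)
  (a b : {ffun 'I_n -> D}) : {ffun 'I_n -> D} :=
  [ffun i => mul (a i) (b i)].

End Defs.

From HB Require Import structures.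
From mathcomp Require Import all_boot all_order all_algebra.
From mathcomp Require Import reals polyrcf zify.
Set Implicit Arguments. Unset Strict Implicit. Unset Printing Implicit Defensive.
Import GRing.Theory.
Import VectorInternalTheory.
Local Open Scope ring_scope.

(* Suppose [p3 (f_S (p1 a) (p2 b)) = a * b] (coordinatewise, [a, b] in [R^r]),
   where [f_S] is componentwise multiplication on [D^n] followed by projection
   onto the coordinates in [S]. Let [x] be the [S]-part of [p1 e_0] and [T] its
   support. With [G b := (p2 b)|_T] and [H z := p3 (z|_T)] we get
   [H (x * G b) = b_0 e_0], and [x *] is injective on vectors supported on [T]
   because [D] has no zero divisors; hence [rank G + rank H <= |T| dim D + 1].
   Restricting [b] to [ker G], or working modulo the image of [H], removes the
   coordinates in [T] and leaves a restriction of [f_(S\T)] of size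
   [r - rank G], resp. [r - rank H]. Induction on [|S|] gives
   [2 r <= |S| dim D + 1], and the [+ 1] disappears because [dim D] is even:
   in odd dimension, for independent [u, v] the operator [L_v - l L_u] (with
   [L_z] left multiplication by [z]) is singular for some real [l], since an
   odd-degree characteristic polynomial has a real root; but it equals
   [L_(v - l u)] with [v - l u <> 0]. *)

Local Notation hadamard a b := (\row_j (a 0 j * b 0 j)).

Section RealLinearMaps.
Variable R : realType.

Section RlinInstance.
Variables (U V : lmodType R) (f : U -> V) (f_lin : Rlin f).

(* [Rlin f] is MathComp's linearity axiom; this alias carries the instance. *)
Definition Rlin_fun of Rlin f : U -> V := f.
HB.instance Definition _ := GRing.isLinear.Build R U V *:%R (Rlin_fun f_lin) f_lin.

Lemma Rlin0 : f 0 = 0. Proof. exact: (linear0 (Rlin_fun f_lin)). Qed.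
Lemma RlinD x y : f (x + y) = f x + f y. Proof. exact: (linearD (Rlin_fun f_lin)). Qed.
Lemma RlinB x y : f (x - y) = f x - f y. Proof. exact: (linearB (Rlin_fun f_lin)). Qed.
Lemma RlinZ k x : f (k *: x) = k *: f x. Proof. exact: (linearZZ (Rlin_fun f_lin)). Qed.

End RlinInstance.

Lemma Rlin_comp (U V W : lmodType R) (f : V -> W) (g : U -> V) :
  Rlin f -> Rlin g -> Rlin (fun x => f (g x)).
Proof. by move=> f_lin g_lin k x y; rewrite g_lin f_lin. Qed.

Lemma Rlin_v2r (vT : vectType R) : Rlin (v2r : vT -> _).
Proof. by move=> k x y; rewrite linearP. Qed.

Lemma Rlin_r2v (vT : vectType R) : Rlin (r2v : _ -> vT).
Proof. by move=> k x y; rewrite linearP. Qed.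

Lemma Rlin_mulmxr m p (A : 'M[R]_(m, p)) : Rlin (fun u : 'rV_m => u *m A).
Proof. by move=> k x y; rewrite mulmxDl scalemxAl. Qed.

Lemma mul_lin1_Rlin m p (f : 'rV[R]_m -> 'rV[R]_p) u : Rlin f -> u *m lin1_mx f = f u.
Proof. by move=> f_lin; rewrite (mul_rV_lin1 (Rlin_fun f_lin)). Qed.

Lemma mul_lin1_vect (U V : vectType R) (f : U -> V) u :
  Rlin f -> u *m lin1_mx (fun z => v2r (f (r2v z))) = v2r (f (r2v u)).
Proof.
move=> f_lin; apply: mul_lin1_Rlin.
exact: Rlin_comp (@Rlin_v2r V) (Rlin_comp f_lin (@Rlin_r2v U)).
Qed.

Lemma v2r_eq0 (vT : vectType R) (v : vT) : (v2r v == 0) = (v == 0).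
Proof. by rewrite -(inj_eq (@v2r_inj _ vT)) linear0. Qed.

End RealLinearMaps.
Arguments Rlin_v2r {R} vT.
Arguments Rlin_r2v {R} vT.
Arguments Rlin_mulmxr {R m p} A.

Section MatrixFacts.
Variable F : fieldType.

Lemma mxrank_sum (I : finType) (P : {pred I}) m p (M : I -> 'M[F]_(m, p)) :
  (\rank (\sum_(i in P) M i)%R <= \sum_(i in P) \rank (M i))%N.
Proof.
apply: (big_ind2 (fun (A : 'M_(m, p)) k => \rank A <= k)%N) => //.
  by rewrite mxrank0.
by move=> A a B b rkA rkB; exact: leq_trans (mxrank_add _ _) (leq_add rkA rkB).
Qed.

(* The rank lost when multiplying by [B] can only grow on a larger row space. *)
Lemma mxrank_mul_sub_defect m1 m2 p q (A : 'M[F]_(m1, p)) (P : 'M[F]_(m2, p))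
    (B : 'M[F]_(p, q)) :
  (A <= P)%MS -> (\rank A + \rank (P *m B) <= \rank (A *m B) + \rank P)%N.
Proof.
move=> sAP; have := mxrankS (capmxS sAP (submx_refl (kermx B))).
by rewrite -(mxrank_mul_ker A B) -(mxrank_mul_ker P B); lia.
Qed.

Lemma pivot_basis m r (A : 'M[F]_(m, r)) :
  exists2 f : 'I_(\rank A) -> 'I_r, injective f &
    exists2 B : 'M[F]_(\rank A, r), (B <= A)%MS & colsub f B = 1%:M.
Proof.
have fullT : row_full (row_base A)^T by rewrite /row_full mxrank_tr; exact: row_base_free.
pose f := fullrankfun fullT.
exists f; first exact: fullrankfun_inj.
have Cu : colsub f (row_base A) \in unitmx.
  by rewrite -unitmx_tr trmx_mxsub fullrowsub_unit.
exists (invmx (colsub f (row_base A)) *m row_base A).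
  by rewrite (submx_trans (submxMl _ _)) ?eq_row_base.
by rewrite -mulmx_colsub mulVmx.
Qed.

Lemma colsub_hadamard k r (f : 'I_k -> 'I_r) (u v : 'rV[F]_r) :
  colsub f (hadamard u v) = hadamard (colsub f u) (colsub f v).
Proof. by apply/rowP => j; rewrite !mxE. Qed.

Section Selection.
Variables (k r : nat) (f : 'I_k -> 'I_r).
Hypothesis f_inj : injective f.

Lemma colsub_mul_rowsub1 (a : 'rV[F]_k) : colsub f (a *m rowsub f 1%:M) = a.
Proof.
rewrite -mulmx_colsub -[RHS]mulmx1; congr (_ *m _).
by apply/matrixP => i j; rewrite !mxE (inj_eq f_inj).
Qed.

Lemma hadamard_mul_rowsub1 (a b : 'rV[F]_k) :
  hadamard (a *m rowsub f 1%:M) (b *m rowsub f 1%:M) = hadamard a b *m rowsub f 1%:M.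
Proof.
have hadE p (u v : 'rV[F]_p) : hadamard u v = u *m diag_mx v.
  by apply/rowP => j; rewrite mul_mx_diag !mxE.
rewrite !hadE -!mulmxA; congr (_ *m _).
have := colsub_mul_rowsub1 b; move: (b *m _) => c cb.
apply/matrixP => i l; rewrite mul_mx_diag mul_diag_mx !mxE.
have [<-|] := eqVneq (f i) l; last by rewrite mul0r mulr0.
by rewrite -cb mxE mulrC.
Qed.

End Selection.

End MatrixFacts.

Lemma odd_pencil_eigen (K : rcfType) n (A B : 'M[K]_n) : odd n -> B \in unitmx ->
  exists l, exists2 u : 'rV_n, u != 0 & u *m A = l *: (u *m B).
Proof.
move=> n_odd Bu; have [|l] := @odd_poly_root _ (char_poly (A *m invmx B)).
  by rewrite size_char_poly /= n_odd.
rewrite -eigenvalue_root_char => /eigenvalueP [u uAB u0].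
by exists l, u => //; rewrite scalemxAl -uAB mulmxA mulmxKV.
Qed.

Section UnitTensorRestrictions.
Variables (R : realType) (U V W : lmodType R) (f : U -> V -> W) (r : nat).
Variables (p1 : 'rV[R]_r -> U) (p2 : 'rV[R]_r -> V) (p3 : W -> 'rV[R]_r).
Hypotheses (p1_lin : Rlin p1) (p2_lin : Rlin p2) (p3_lin : Rlin p3).

Lemma subrank_restriction_subspace m (K : 'M[R]_(m, r)) :
  (forall a b, (b <= K)%MS -> p3 (f (p1 a) (p2 b)) = hadamard a b) ->
  subrank_restriction f (\rank K).
Proof.
move=> diagK; have [g g_inj [B sBK gB]] := pivot_basis K.
exists (fun a => p1 (a *m rowsub g 1%:M)), (fun b => p2 (b *m B)),
  (fun z => colsub g (p3 z)); split.
- exact: Rlin_comp p1_lin (Rlin_mulmxr _).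
- exact: Rlin_comp p2_lin (Rlin_mulmxr B).
- by move=> k z z'; rewrite p3_lin; apply/rowP => j; rewrite !mxE.
move=> a b; rewrite diagK ?(submx_trans (submxMl _ _) sBK) //.
by rewrite colsub_hadamard colsub_mul_rowsub1 // -mulmx_colsub gB mulmx1.
Qed.

Lemma subrank_restriction_modulo m (C : 'M[R]_(m, r)) :
  (forall a b, (p3 (f (p1 a) (p2 b)) - hadamard a b <= C)%MS) ->
  subrank_restriction f (r - \rank C).
Proof.
move=> diagC; rewrite -(mxrank_tr C) -mxrank_ker.
have [g g_inj [B /sub_kermxP BC gB]] := pivot_basis (kermx C^T).
exists (fun a => p1 (a *m rowsub g 1%:M)), (fun b => p2 (b *m rowsub g 1%:M)),
  (fun z => p3 z *m B^T); split.
- exact: Rlin_comp p1_lin (Rlin_mulmxr _).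
- exact: Rlin_comp p2_lin (Rlin_mulmxr _).
- exact: Rlin_comp (Rlin_mulmxr B^T) p3_lin.
move=> a b; have /submxP [c /eqP] := diagC (a *m rowsub g 1%:M) (b *m rowsub g 1%:M).
have CB : C *m B^T = 0 by rewrite -[LHS]trmxK trmx_mul trmxK BC trmx0.
rewrite subr_eq => /eqP ->; rewrite mulmxDl -mulmxA CB mulmx0 add0r.
rewrite hadamard_mul_rowsub1 // -mulmxA.
suff -> : rowsub g 1%:M *m B^T = 1%:M by rewrite mulmx1.
by rewrite -[rowsub _ _]trmxK trmx_mxsub -trmx_mul mulmx_colsub trmx1 mulmx1 gB trmx1.
Qed.

End UnitTensorRestrictions.

Section DivisionAlgebra.
Variables (R : realType) (D : vectType R) (mul : D -> D -> D).
Hypothesis mul_div : division_algebra mul.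

Lemma divalg_mulr_lin a : Rlin (mul a).
Proof. by case: mul_div => [[mulr_lin _] _]; exact: mulr_lin. Qed.

Lemma divalg_mull_lin b : Rlin (mul^~ b).
Proof. by case: mul_div => [[_ mull_lin] _]; exact: mull_lin. Qed.

Lemma divalg_mul_eq0 a w : mul a w = 0 -> (a == 0) || (w == 0).
Proof.
have [->|a0] := eqVneq a 0 => //= aw0.
have [g mulK _] := proj2 mul_div a a0.
by apply/eqP; rewrite -(mulK w) aw0 -{1}(Rlin0 (divalg_mulr_lin a)) mulK.
Qed.

Lemma divalg_dim_even : (2 <= \dim {:D})%N -> ~~ odd (\dim {:D}).
Proof.
move=> dim_ge2; apply/negP => dim_odd.
pose L z := lin1_mx (fun u : 'rV_(dim D) => v2r (mul z (r2v u))).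
have LE z u : u *m L z = v2r (mul z (r2v u)).
  by rewrite mul_lin1_vect //; exact: divalg_mulr_lin.
have L_unit z : z != 0 -> L z \in unitmx.
  move=> z0; rewrite -row_free_unit -kermx_eq0; apply/rowV0P => u /sub_kermxP.
  rewrite LE => /eqP; rewrite v2r_eq0 => /eqP /divalg_mul_eq0; rewrite (negPf z0) /=.
  by move=> /eqP u0; rewrite -[u]r2vK u0 linear0.
pose x := vpick {:D}.
have x0 : x != 0 by rewrite vpick0 -dimv_eq0 -lt0n (leq_trans _ dim_ge2).
have /subvPn [y _ yNx] : ~~ ({:D} <= <[x]>)%VS.
  by apply: contraTN dim_ge2 => /dimvS; rewrite dim_vline x0 -ltnNge.
rewrite dimvf in dim_odd.
have [l [u u0 uyx]] := odd_pencil_eigen (L y) dim_odd (L_unit x x0).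
have : mul (y - l *: x) (r2v u) = 0.
  apply: v2r_inj; rewrite (RlinB (divalg_mull_lin _)) (RlinZ (divalg_mull_lin _)).
  by rewrite linearB linearZ /= -!LE uyx subrr linear0.
move/divalg_mul_eq0; rewrite subr_eq0 -(linear0 r2v) (inj_eq (@r2v_inj _ D)).
rewrite (negPf u0) orbF.
by move=> /eqP y_lx; rewrite y_lx memvZ ?memv_line in yNx.
Qed.

End DivisionAlgebra.

Section ComponentwiseMultiplication.
Variables (R : realType) (D : vectType R) (mul : D -> D -> D) (n : nat).
Local Notation E := {ffun 'I_n -> D}.
Local Notation dimD := (\dim {:D}).

Definition proj_on (S : {set 'I_n}) (v : E) : E :=
  [ffun i => if i \in S then v i else 0].

Definition supp (v : E) : {set 'I_n} := [set i | v i != 0].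

Definition single (s : 'I_n) (d : D) : E := [ffun i => if i == s then d else 0].

Definition compmul_on (S : {set 'I_n}) (u v : E) : E := proj_on S (compmul mul u v).

Lemma Rlin_proj_on S : Rlin (proj_on S).
Proof.
by move=> k x y; apply/ffunP => i; rewrite !ffunE; case: ifP; rewrite ?scaler0 ?addr0.
Qed.

Lemma Rlin_single s : Rlin (single s).
Proof.
by move=> k x y; apply/ffunP => i; rewrite !ffunE; case: ifP; rewrite ?scaler0 ?addr0.
Qed.

Lemma Rlin_ffun_app s : Rlin (fun v : E => v s).
Proof. by move=> k x y; rewrite !ffunE. Qed.

Lemma proj_onT v : proj_on setT v = v.
Proof. by apply/ffunP => i; rewrite ffunE inE. Qed.

Lemma proj_on0 v : proj_on set0 v = 0.
Proof. by apply/ffunP => i; rewrite !ffunE inE. Qed.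

Lemma proj_on_id S v : proj_on S (proj_on S v) = proj_on S v.
Proof. by apply/ffunP => i; rewrite !ffunE; case: (i \in S). Qed.

Lemma proj_on_supp v : proj_on (supp v) v = v.
Proof. by apply/ffunP => i; rewrite ffunE inE; case: eqP. Qed.

Lemma supp_proj_on S v : supp (proj_on S v) \subset S.
Proof. by apply/subsetP => i; rewrite !inE ffunE; case: ifP; rewrite ?eqxx. Qed.

Lemma proj_onD (S T : {set 'I_n}) v :
  T \subset S -> proj_on S v = proj_on (S :\: T) v + proj_on T v.
Proof.
move=> /subsetP sTS; apply/ffunP => i; rewrite !ffunE !inE.
by case: (boolP (i \in T)) => [/sTS -> | _]; rewrite ?add0r ?addr0.
Qed.

Lemma proj_on_sum S v : proj_on S v = \sum_(s in S) single s (v s).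
Proof.
apply/ffunP => i; rewrite sum_ffunE ffunE.
case: ifP => iS; last first.
  by rewrite big1 // => s sS; rewrite ffunE; case: eqP => // eis; rewrite eis sS in iS.
rewrite (bigD1 i) //= ffunE eqxx big1 ?addr0 // => s /andP [_ /negPf si].
by rewrite ffunE eq_sym si.
Qed.

(* [proj_on S] factors through the copies of [D] indexed by [S]. *)
Lemma mxrank_proj_on S :
  (\rank (lin1_mx (fun z => v2r (proj_on S (r2v z)))) <= #|S| * dimD)%N.
Proof.
pose A s := lin1_mx (fun z => v2r ((r2v z : E) s)).
pose B s := lin1_mx (fun z => v2r (single s (r2v z))).
suff -> : lin1_mx (fun z => v2r (proj_on S (r2v z))) = (\sum_(s in S) A s *m B s)%R.
  apply: leq_trans (mxrank_sum _ _) _; rewrite -sum_nat_const dimvf.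
  by apply: leq_sum => s _; exact: leq_trans (mxrankM_maxr _ _) (rank_leq_row _).
apply/eqP/mulmxP => u; rewrite mulmx_sumr mul_lin1_vect; last exact: Rlin_proj_on.
rewrite proj_on_sum linear_sum; apply: eq_bigr => s _.
rewrite mulmxA mul_lin1_vect ?r2vK; last exact: Rlin_single.
rewrite mul_lin1_Rlin ?v2rK //.
exact: Rlin_comp (Rlin_v2r D) (Rlin_comp (Rlin_ffun_app s) (Rlin_r2v E)).
Qed.

Section DivisionAlgebraCase.
Hypothesis mul_div : division_algebra mul.

Lemma Rlin_compmul (u : E) : Rlin (compmul mul u).
Proof. by move=> k x y; apply/ffunP => i; rewrite !ffunE divalg_mulr_lin. Qed.

Lemma proj_on_compmull S u v :
  proj_on S (compmul mul u v) = compmul mul (proj_on S u) v.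
Proof.
apply/ffunP => i; rewrite !ffunE; case: ifP => // _.
by rewrite (Rlin0 (divalg_mull_lin mul_div (v i))).
Qed.

Lemma proj_on_compmulr S u v :
  proj_on S (compmul mul u v) = compmul mul u (proj_on S v).
Proof.
apply/ffunP => i; rewrite !ffunE; case: ifP => // _.
by rewrite (Rlin0 (divalg_mulr_lin mul_div (u i))).
Qed.

Lemma compmul_eq0_supp u w : compmul mul u w = 0 -> proj_on (supp u) w = 0.
Proof.
move=> /ffunP uw0; apply/ffunP => i; have := uw0 i; rewrite !ffunE inE.
by case: ifP => // ui0 /(divalg_mul_eq0 mul_div); rewrite (negPf ui0) => /eqP.
Qed.

Section Step.
Variables (S : {set 'I_n}) (r : nat).
Variables (p1 p2 : 'rV[R]_r.+1 -> E) (p3 : E -> 'rV[R]_r.+1).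
Hypotheses (p1_lin : Rlin p1) (p2_lin : Rlin p2) (p3_lin : Rlin p3).
Hypothesis p_diag : forall a b, p3 (compmul_on S (p1 a) (p2 b)) = hadamard a b.

Let x := proj_on S (p1 (delta_mx 0 0)).
Let T := supp x.
Let G := lin1_mx (fun b => v2r (proj_on T (p2 b))).
Let H := lin1_mx (fun z => p3 (proj_on T (r2v z))).

Let sTS : T \subset S. Proof. exact: supp_proj_on. Qed.

Let mulG u : u *m G = v2r (proj_on T (p2 u)).
Proof.
apply: mul_lin1_Rlin.
exact: Rlin_comp (Rlin_v2r E) (Rlin_comp (Rlin_proj_on T) p2_lin).
Qed.

Let mulH u : u *m H = p3 (proj_on T (r2v u)).
Proof.
apply: mul_lin1_Rlin.
exact: Rlin_comp p3_lin (Rlin_comp (Rlin_proj_on T) (Rlin_r2v E)).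
Qed.

Let x_diag b : p3 (compmul mul x (p2 b)) = b *m delta_mx 0 0.
Proof.
rewrite /x -proj_on_compmull p_diag; apply/rowP => j; rewrite !mxE.
rewrite (bigD1 0) //= big1 ?addr0 => [|i /negPf i0]; last by rewrite !mxE i0 mulr0.
by rewrite !mxE eqxx /=; case: eqP => [->|_]; rewrite ?mul0r ?mulr0 // mulrC.
Qed.

Lemma supp_neq0 : T != set0.
Proof.
apply/eqP => T0; have := x_diag (delta_mx 0 0).
rewrite -[x]proj_on_supp -/T T0 -proj_on_compmull proj_on0 (Rlin0 p3_lin).
rewrite mul_delta_mx => /matrixP/(_ 0 0); rewrite !mxE eqxx => /eqP.
by rewrite eq_sym oner_eq0.
Qed.

(* [H (x * G) = (b |-> b_0 e_0)] has rank one, while [x *] is injective on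
   vectors supported on [T]. *)
Lemma rank_G_add_rank_H : (\rank G + \rank H <= #|T| * dimD + 1)%N.
Proof.
pose L := lin1_mx (fun z => v2r (compmul mul x (r2v z))).
pose P := lin1_mx (fun z => v2r (proj_on T (r2v z))).
have mulL u : u *m L = v2r (compmul mul x (r2v u)).
  by apply: mul_lin1_vect; exact: Rlin_compmul.
have mulP u : u *m P = v2r (proj_on T (r2v u)).
  by apply: mul_lin1_vect; exact: Rlin_proj_on.
have xT w : proj_on T (compmul mul x w) = compmul mul x w.
  by rewrite proj_on_compmull proj_on_supp.
have GLH : G *m L *m H = delta_mx 0 0.
  apply/eqP/mulmxP => u; rewrite !mulmxA mulG mulL mulH !v2rK.
  by rewrite -proj_on_compmulr proj_on_id xT x_diag.
have rGL : \rank (G *m L) = \rank G.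
  suff GL0 : (G :&: kermx L)%MS = 0.
    by rewrite -(mxrank_mul_ker G L) GL0 mxrank0 addn0.
  apply/eqP/rowV0P => v; rewrite sub_capmx => /andP [/submxP [w ->]].
  move=> /sub_kermxP; rewrite mulG mulL v2rK => /eqP; rewrite v2r_eq0.
  by move=> /eqP /compmul_eq0_supp; rewrite proj_on_id => ->; rewrite linear0.
have GLP : (G *m L <= P)%MS.
  suff <- : G *m L *m P = G *m L by exact: submxMl.
  by apply/eqP/mulmxP => u; rewrite !mulmxA mulG mulL mulP v2rK xT.
have PH : P *m H = H.
  by apply/eqP/mulmxP => u; rewrite mulmxA mulP mulH v2rK proj_on_id.
have := mxrank_mul_sub_defect H GLP; rewrite GLH PH rGL mxrank_delta.
by have := mxrank_proj_on T; rewrite -/P; lia.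
Qed.

Lemma subrank_ker : subrank_restriction (compmul_on (S :\: T)) (r.+1 - \rank G).
Proof.
rewrite -mxrank_ker; apply: (subrank_restriction_subspace p1_lin p2_lin p3_lin) => a b.
move=> /sub_kermxP; rewrite mulG => /eqP; rewrite v2r_eq0 => /eqP bT0.
rewrite -p_diag /compmul_on (proj_onD _ sTS) [X in _ + X]proj_on_compmulr bT0.
by rewrite (Rlin0 (Rlin_compmul _)) addr0.
Qed.

Lemma subrank_coker : subrank_restriction (compmul_on (S :\: T)) (r.+1 - \rank H).
Proof.
apply: (subrank_restriction_modulo p1_lin p2_lin p3_lin) => a b.
rewrite -p_diag /compmul_on (proj_onD _ sTS) (RlinD p3_lin) opprD addrA subrr add0r.
by rewrite -[X in p3 (proj_on T X)]v2rK -mulH -mulNmx submxMl.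
Qed.

Lemma subrank_compmul_on_drop :
  exists2 k, subrank_restriction (compmul_on (S :\: T)) k &
    (2 * r.+1 <= 2 * k + #|T| * dimD + 1)%N.
Proof.
have := rank_G_add_rank_H; have := rank_leq_row G; have := rank_leq_col H.
have [GH|HG] := leqP (\rank G) (\rank H).
- by exists (r.+1 - \rank G)%N; [exact: subrank_ker | lia].
- by exists (r.+1 - \rank H)%N; [exact: subrank_coker | lia].
Qed.

End Step.

Lemma subrank_compmul_on_le S r : ~~ odd dimD ->
  subrank_restriction (compmul_on S) r -> (2 * r <= #|S| * dimD)%N.
Proof.
move=> dim_even; have [N] := ubnP #|S|; elim: N S r => // N IH S r ltSN.
case: r => [|r]; first by rewrite muln0.
move=> [p1 [p2 [p3 [p1_lin p2_lin p3_lin p_diag]]]].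
have T0 := supp_neq0 p3_lin p_diag.
have sTS := supp_proj_on S (p1 (delta_mx 0 0)).
have [k subk drop] := subrank_compmul_on_drop p1_lin p2_lin p3_lin p_diag.
set T := supp _ in T0 sTS subk drop.
have cardS : #|S| = (#|S :\: T| + #|T|)%N.
  by rewrite -(cardsID T S) (setIidPr sTS) addnC.
(* The [+ 1] of the drop is absorbed because [dimD] is even. *)
have [h dimE] : exists h, dimD = (2 * h)%N.
  by exists dimD./2; rewrite -[LHS]odd_double_half (negPf dim_even) -mul2n.
have := IH _ _ _ subk; move: drop (card_gt0 T) ltSN; rewrite T0 cardS dimE.
nia.
Qed.

End DivisionAlgebraCase.

End ComponentwiseMultiplication.

Theorem theorem5p3 (R : realType) (D : vectType R) (mul : D -> D -> D)
  (n : nat) :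
  division_algebra mul ->
  (2 <= \dim {:D})%N ->
  forall r : nat, subrank_restriction (@compmul R D mul n) r ->
  (2 * r <= n * \dim {:D})%N.
Proof.
move=> mul_div dim_ge2 r [p1 [p2 [p3 [p1_lin p2_lin p3_lin p_diag]]]].
have dim_even := divalg_dim_even mul_div dim_ge2.
have := subrank_compmul_on_le mul_div (S := [set: 'I_n]) dim_even.
rewrite cardsT card_ord; apply.
by exists p1, p2, p3; split => // a b; rewrite /compmul_on proj_onT.
Qed.
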